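(* Let $a\ge2$ be an integer and $G=\langle x,y\mid x^a=y^a\rangle$, which is a Garside group with Garside element $\Delta=x^a=y^a$ (central). Then (i) $x$ and $y$ are not conjugate in $G$ (although $x^a=y^a$ and both are periodic); (ii) there is no Garside structure on $G$ in which $x$ is a Garside element.
   Context: A Garside structure on a group $G$ is a triple $(G,G^+,\Delta)$ where $G$ is the group of fractions of a Garside monoid $G^+$ (an atomic, left and right cancellative monoid that is a lattice under both the prefix order and the suffix order) and $\Delta\in G^+$ is an element whose left and right divisors in $G^+$ coincide, form a finite set, and generate $G^+$; $\Delta$ is then called a Garside element. An element $g$ is periodic with respect to $\Delta$ if $g=1$ or $g^k$ is conjugate to $\Delta^\ell$ for some nonzero integers $k,\ell$. *)

From Stdlib Require Import List Arith.
Import ListNotations.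
Set Implicit Arguments.

Record Group := {
  carrier :> Type;
  gmul : carrier -> carrier -> carrier;
  gone : carrier;
  ginv : carrier -> carrier;
  gmul_assoc : forall a b c, gmul a (gmul b c) = gmul (gmul a b) c;
  gmul_1l : forall a, gmul gone a = a;
  gmul_1r : forall a, gmul a gone = a;
  gmul_Vl : forall a, gmul (ginv a) a = gone;
  gmul_Vr : forall a, gmul a (ginv a) = gone
}.

Arguments gmul {g} _ _.
Arguments gone {g}.
Arguments ginv {g} _.

Fixpoint gpow (G : Group) (g : G) (n : nat) : G :=
  match n with
  | 0 => gone
  | S n => gmul g (gpow G g n)
  end.
Arguments gpow {G} g n.

Definition gprod (G : Group) (l : list G) : G := fold_right gmul gone l.
Arguments gprod {G} l.

Inductive in_gen (G : Group) (S : G -> Prop) : G -> Prop :=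
| gen_one : in_gen G S gone
| gen_base : forall s, S s -> in_gen G S s
| gen_mul : forall g h, in_gen G S g -> in_gen G S h -> in_gen G S (gmul g h)
| gen_inv : forall g, in_gen G S g -> in_gen G S (ginv g).
Arguments in_gen {G} S _.

Definition is_hom (G H : Group) (f : G -> H) : Prop :=
  forall g h, f (gmul g h) = gmul (f g) (f h).
Arguments is_hom {G H} f.

(** (G, x, y) is a presentation of < x, y | x^a = y^a >: the relation holds,
    x and y generate G, and G has the universal property of the presented group. *)
Definition is_presentation (a : nat) (G : Group) (x y : G) : Prop :=
  gpow x a = gpow y a /\
  (forall g, in_gen (fun s => s = x \/ s = y) g) /\
  (forall (H : Group) (h1 h2 : H), gpow h1 a = gpow h2 a ->
     exists f : G -> H, is_hom f /\ f x = h1 /\ f y = h2).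
Arguments is_presentation a {G} x y.

Definition conjugate (G : Group) (g h : G) : Prop :=
  exists c : G, gmul (ginv c) (gmul g c) = h.
Arguments conjugate {G}.

Definition is_submonoid (G : Group) (M : G -> Prop) : Prop :=
  M gone /\ (forall p q, M p -> M q -> M (gmul p q)).
Arguments is_submonoid {G}.

Definition left_div (G : Group) (M : G -> Prop) (p q : G) : Prop :=
  M p /\ exists c, M c /\ gmul p c = q.
Arguments left_div {G}.

Definition right_div (G : Group) (M : G -> Prop) (p q : G) : Prop :=
  M p /\ exists c, M c /\ gmul c p = q.
Arguments right_div {G}.

Definition is_lattice (G : Group) (M : G -> Prop) (R : G -> G -> Prop) : Prop :=
  forall p q, M p -> M q ->
    (exists d, M d /\ R d p /\ R d q /\
       forall e, M e -> R e p -> R e q -> R e d) /\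
    (exists l, M l /\ R p l /\ R q l /\
       forall e, M e -> R p e -> R q e -> R l e).
Arguments is_lattice {G}.

Definition atomic (G : Group) (M : G -> Prop) : Prop :=
  forall m, M m -> exists N : nat,
    forall l : list G, (forall z, In z l -> M z /\ z <> gone) ->
      gprod l = m -> length l <= N.
Arguments atomic {G}.

(** (G, M, D) is a Garside structure on G: M is a Garside monoid (a submonoid of
    G, so cancellative; atomic; lattice for prefix and suffix orders) whose group
    of fractions is G, and D is a Garside element of M. *)
Definition garside_structure (G : Group) (M : G -> Prop) (D : G) : Prop :=
  is_submonoid M /\
  (forall g : G, exists p q, M p /\ M q /\ g = gmul p (ginv q)) /\
  atomic M /\
  is_lattice M (left_div M) /\
  is_lattice M (right_div M) /\
  M D /\
  (forall p, left_div M p D <-> right_div M p D) /\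
  (exists s : list G, forall p, left_div M p D -> In p s) /\
  (forall m, M m -> exists l : list G,
      (forall z, In z l -> left_div M z D) /\ gprod l = m).

Arguments garside_structure {G}.

From Stdlib Require Import List Arith Lia Classical.
From mathcomp Require ssreflect ssrbool eqtype ssrnat ssralg zmodp.
Import ListNotations.

(** (i) The cyclic group Z/a with x |-> 1, y |-> 0 satisfies the relation,
    so the universal property gives a homomorphism to an abelian group
    separating x from y; conjugate elements have equal images in an abelian
    group, hence x and y are not conjugate.

    (ii) We prove, for an arbitrary Garside structure (G, M, D), that every
    y with y^a = D^a (a >= 1, D^a central) is conjugate to D.  Conjugation
    by D preserves M, so every element becomes positive after multiplying by
    a power of D, and finite sets have least upper bounds in G for the prefix
    order g <= h :<-> h = g m with m in M.  The map T g = y g D^-1 is monotone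
    and permutes the finite orbit O = { y^i D^-i | i < a }, so the least
    upper bound L of O satisfies L <= T L.  Then v = L^-1 y L satisfies
    v D^-1 in M and v^a = D^a, which by atomicity forces v = D.
    Applied with D = x this contradicts (i), so x is no Garside element. *)

Section GroupFacts.
Context {G : Group}.
Local Infix "·" := gmul (at level 40, left associativity).

Lemma mulKg (a b : G) : ginv a · (a · b) = b.
Proof. rewrite gmul_assoc, gmul_Vl, gmul_1l; reflexivity. Qed.

Lemma mulKVg (a b : G) : a · (ginv a · b) = b.
Proof. rewrite gmul_assoc, gmul_Vr, gmul_1l; reflexivity. Qed.

Lemma mulgK (a b : G) : a · b · ginv b = a.
Proof. rewrite <- gmul_assoc, gmul_Vr, gmul_1r; reflexivity. Qed.

Lemma mulg_cancel_l (a b c : G) : a · b = a · c -> b = c.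
Proof. intro E. rewrite <- (mulKg a b), E, mulKg. reflexivity. Qed.

Lemma invg_unique (a b : G) : a · b = gone -> b = ginv a.
Proof. intro E. apply (mulg_cancel_l a). rewrite E, gmul_Vr. reflexivity. Qed.

Lemma invgK (a : G) : ginv (ginv a) = a.
Proof. symmetry. apply invg_unique, gmul_Vl. Qed.

Lemma invgM (a b : G) : ginv (a · b) = ginv b · ginv a.
Proof.
  symmetry. apply invg_unique. rewrite <- gmul_assoc, mulKVg, gmul_Vr. reflexivity.
Qed.

Lemma invg1 : ginv (@gone G) = gone.
Proof. symmetry. apply invg_unique, gmul_1l. Qed.

Lemma gpow_commute (g : G) n : g · gpow g n = gpow g n · g.
Proof.
  induction n as [|n IH]; simpl.
  - rewrite gmul_1l, gmul_1r. reflexivity.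
  - rewrite <- gmul_assoc, <- IH. reflexivity.
Qed.

Lemma gpow_add (g : G) m n : gpow g (m + n) = gpow g m · gpow g n.
Proof.
  induction m as [|m IH]; simpl.
  - rewrite gmul_1l. reflexivity.
  - rewrite IH, gmul_assoc. reflexivity.
Qed.

Lemma gpow_inv (g : G) n : gpow (ginv g) n = ginv (gpow g n).
Proof.
  induction n as [|n IH]; simpl.
  - symmetry. apply invg1.
  - rewrite IH, <- invgM, gpow_commute. reflexivity.
Qed.

Definition conjg (c g : G) : G := ginv c · g · c.

Lemma conjgM (c g h : G) : conjg c (g · h) = conjg c g · conjg c h.
Proof. unfold conjg. rewrite <- !gmul_assoc, mulKVg. reflexivity. Qed.

Lemma conjg1 (c : G) : conjg c gone = gone.
Proof. unfold conjg. rewrite gmul_1r, gmul_Vl. reflexivity. Qed.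

Lemma conjg_by1 (g : G) : conjg gone g = g.
Proof. unfold conjg. rewrite invg1, gmul_1l, gmul_1r. reflexivity. Qed.

Lemma conjg_byM (c d g : G) : conjg (c · d) g = conjg d (conjg c g).
Proof. unfold conjg. rewrite invgM, <- !gmul_assoc. reflexivity. Qed.

Lemma conjgK (c g : G) : conjg (ginv c) (conjg c g) = g.
Proof. rewrite <- conjg_byM, gmul_Vr. apply conjg_by1. Qed.

Lemma conjg_gpow (c g : G) k : gpow (conjg c g) k = conjg c (gpow g k).
Proof.
  induction k as [|k IH]; simpl.
  - symmetry. apply conjg1.
  - rewrite IH, conjgM. reflexivity.
Qed.

Lemma conjg_central (c z : G) : (forall g, z · g = g · z) -> conjg c z = z.
Proof. intro Hz. unfold conjg. rewrite <- gmul_assoc, Hz. apply mulKg. Qed.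

Lemma central_in_gen (S : G -> Prop) (z : G) :
  (forall s, S s -> z · s = s · z) ->
  forall g, in_gen S g -> z · g = g · z.
Proof.
  intros Hz g Hg. induction Hg as [|s Hs|g h _ IHg _ IHh|g _ IH].
  - rewrite gmul_1l, gmul_1r. reflexivity.
  - apply Hz, Hs.
  - rewrite gmul_assoc, IHg, <- gmul_assoc, IHh, gmul_assoc. reflexivity.
  - apply (mulg_cancel_l g). rewrite gmul_assoc, <- IH, <- gmul_assoc,
      gmul_Vr, gmul_1r, gmul_assoc, gmul_Vr, gmul_1l. reflexivity.
Qed.

End GroupFacts.

Lemma hom_one {G H : Group} (f : G -> H) : is_hom f -> f gone = gone.
Proof.
  intro Hf. apply (mulg_cancel_l (f gone)). rewrite <- Hf, !gmul_1r. reflexivity.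
Qed.

Lemma hom_abelian_conjugate {G H : Group} (f : G -> H) (g h : G) :
  is_hom f -> (forall u v : H, gmul u v = gmul v u) ->
  conjugate g h -> f g = f h.
Proof.
  intros Hf Hcomm [c <-]. rewrite !Hf, Hcomm, <- gmul_assoc, (Hcomm (f c)),
    <- Hf, gmul_Vl, (hom_one f Hf), gmul_1r. reflexivity.
Qed.

Module CyclicGroup.
Import ssreflect ssrbool eqtype ssrnat ssralg zmodp GRing.Theory.
Local Open Scope ring_scope.

Definition Zmod (a : nat) : Group :=
  {| carrier := 'Z_a; gmul := +%R; gone := 0; ginv := -%R;
     gmul_assoc := @addrA _; gmul_1l := @add0r _; gmul_1r := @addr0 _;
     gmul_Vl := @addNr _; gmul_Vr := @addrN _ |}.

Lemma Zmod_gpow (a k : nat) (g : Zmod a) : gpow g k = g *+ k.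
Proof. by elim: k => [|k IH] //=; rewrite IH mulrS. Qed.

Lemma Zmod_witness (a : nat) : (2 <= a)%coq_nat ->
  exists (H : Group) (h1 h2 : H),
    gpow h1 a = gpow h2 a /\ h1 <> h2 /\ (forall u v : H, gmul u v = gmul v u).
Proof.
move=> /leP ha; exists (Zmod a), 1, 0; rewrite !Zmod_gpow mul0rn pchar_Zp //.
split=> //; split; last exact: addrC.
by move=> E; move: (@oner_neq0 'Z_a); rewrite E eqxx.
Qed.
End CyclicGroup.

Section Atomic.
Context {G : Group}.
Local Infix "·" := gmul (at level 40, left associativity).
Variable M : G -> Prop.
Hypothesis Mone : M gone.
Hypothesis Matomic : atomic M.

(** An atomic monoid has no nontrivial invertible elements: otherwise
    1 = (u z)^k would have decompositions of unbounded length. *)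
Lemma atomic_no_units (u z : G) : M u -> M z -> u · z = gone -> u = gone.
Proof.
  intros Mu Mz Euz. apply NNPP. intro Hu.
  assert (Hz : z <> gone) by (intro E; subst z; rewrite gmul_1r in Euz; contradiction).
  destruct (Matomic gone Mone) as [N HN].
  set (pairs k := concat (repeat [u; z] k)).
  assert (Hlen : forall k, length (pairs k) = 2 * k).
  { induction k as [|k IH]; simpl; [reflexivity|]. unfold pairs in IH. rewrite IH. lia. }
  assert (Hprod : forall k, gprod (pairs k) = gone).
  { induction k as [|k IH]; simpl; [reflexivity|].
    unfold pairs in IH. rewrite IH, gmul_1r. exact Euz. }
  enough (2 * S N <= N) by lia.
  rewrite <- (Hlen (S N)). apply HN; [|apply Hprod].
  intros w Hw. apply in_concat in Hw. destruct Hw as [l [Hl Hw]].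
  apply repeat_spec in Hl. subst l.
  destruct Hw as [<-|[<-|[]]]; split; assumption.
Qed.

End Atomic.

Section PrefixLcm.
Context {G : Group}.
Local Infix "·" := gmul (at level 40, left associativity).
Variable M : G -> Prop.
Hypothesis Mone : M gone.
Hypothesis Mmul : forall p q, M p -> M q -> M (p · q).
Hypothesis Mlattice : is_lattice M (left_div M).

Lemma left_div_trans p q r : left_div M p q -> left_div M q r -> left_div M p r.
Proof.
  intros [Mp [c1 [Mc1 E1]]] [_ [c2 [Mc2 E2]]].
  split; [exact Mp|]. exists (c1 · c2). split; [apply Mmul; assumption|].
  rewrite gmul_assoc, E1. exact E2.
Qed.

Lemma lcm_list (l : list G) : (forall h, In h l -> M h) ->
  exists J, M J /\ (forall h, In h l -> left_div M h J) /\
    (forall e, M e -> (forall h, In h l -> left_div M h e) -> left_div M J e).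
Proof.
  induction l as [|h l IH]; intro Hl.
  - exists gone. split; [exact Mone|]. split; [intros h []|].
    intros e Me _. split; [exact Mone|]. exists e. split; [exact Me|]. apply gmul_1l.
  - destruct IH as [J [MJ [HJub HJleast]]]; [intros w Hw; apply Hl; right; exact Hw|].
    destruct (Mlattice h J (Hl h (or_introl eq_refl)) MJ)
      as [_ [K [MK [HhK [HJK HKleast]]]]].
    exists K. split; [exact MK|]. split.
    + intros w [<-|Hw]; [exact HhK|]. apply (left_div_trans _ J); auto.
    + intros e Me He. apply HKleast; auto.
      * apply He. left. reflexivity.
      * apply HJleast; auto. intros w Hw. apply He. right. exact Hw.
Qed.

End PrefixLcm.

Section GarsideElement.
Context {G : Group}.
Local Infix "·" := gmul (at level 40, left associativity).
Variables (M : G -> Prop) (D : G).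
Hypothesis Mone : M gone.
Hypothesis Mmul : forall p q, M p -> M q -> M (p · q).
Hypothesis MD : M D.
Hypothesis Ddiv : forall p, left_div M p D <-> right_div M p D.
Hypothesis Dgen : forall m, M m -> exists l : list G,
  (forall z, In z l -> left_div M z D) /\ gprod l = m.

Definition stable (c : G) : Prop := forall m, M m -> M (conjg c m).

Lemma stable_of_divisors (c : G) :
  (forall p, left_div M p D -> M (conjg c p)) -> stable c.
Proof.
  intros Hc m Hm. destruct (Dgen m Hm) as [l [Hl <-]]. clear Hm.
  induction l as [|z l IH]; simpl.
  - rewrite conjg1. exact Mone.
  - rewrite conjgM. apply Mmul.
    + apply Hc, Hl. left. reflexivity.
    + apply IH. intros w Hw. apply Hl. right. exact Hw.
Qed.

Lemma stable_pow (c : G) : stable c -> forall k, stable (gpow c k).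
Proof.
  intros Hc k. induction k as [|k IH]; intros m Hm; simpl.
  - rewrite conjg_by1. exact Hm.
  - rewrite conjg_byM. apply IH, Hc, Hm.
Qed.

(** If p c = D = c d then D^-1 p D = d. *)
Lemma garside_stable : stable D.
Proof.
  apply stable_of_divisors. intros p Hp.
  destruct Hp as [Mp [c [Mc Epc]]].
  destruct (proj2 (Ddiv c) (conj Mc (ex_intro _ p (conj Mp Epc)))) as [_ [d [Md Ecd]]].
  replace (conjg D p) with d; [exact Md|].
  unfold conjg. rewrite <- Ecd at 2. rewrite gmul_assoc, <- (gmul_assoc _ (ginv D)), Epc.
  rewrite gmul_Vl, gmul_1l. reflexivity.
Qed.

(** If e p = D = g e then D p D^-1 = g. *)
Lemma garside_inv_stable : stable (ginv D).
Proof.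
  apply stable_of_divisors. intros p Hp.
  destruct (proj1 (Ddiv p) Hp) as [Mp [e [Me Eep]]].
  destruct (proj1 (Ddiv e) (conj Me (ex_intro _ p (conj Mp Eep)))) as [_ [g [Mg Ege]]].
  replace (conjg (ginv D) p) with g; [exact Mg|].
  unfold conjg. rewrite invgK, <- Ege at 1. rewrite <- (gmul_assoc _ g), Eep, mulgK.
  reflexivity.
Qed.

Lemma divides_garside_power m : M m -> exists k c, M c /\ m · c = gpow D k.
Proof.
  intro Hm. destruct (Dgen m Hm) as [l [Hl <-]]. clear Hm. exists (length l).
  induction l as [|z l IH]; simpl.
  - exists gone. split; [exact Mone|]. apply gmul_1l.
  - destruct IH as [c [Mc Ec]]; [intros w Hw; apply Hl; right; exact Hw|].
    destruct (Hl z (or_introl eq_refl)) as [_ [c0 [Mc0 Ec0]]].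
    exists (c · conjg (gpow D (length l)) c0). split.
    + apply Mmul; [exact Mc|]. apply (stable_pow D garside_stable), Mc0.
    + unfold conjg. rewrite <- !gmul_assoc, (gmul_assoc _ (gprod l) c), Ec, mulKVg.
      rewrite gmul_assoc, Ec0. reflexivity.
Qed.

Hypothesis Dfrac : forall g : G, exists p q, M p /\ M q /\ g = p · ginv q.

Lemma positive_shift h : exists n, M (gpow D n · h).
Proof.
  destruct (Dfrac h) as [p [q [Mp [Mq ->]]]].
  destruct (divides_garside_power q Mq) as [k [c [Mc Eqc]]].
  exists k.
  assert (Einv : ginv q = c · ginv (gpow D k))
    by (rewrite <- Eqc, invgM, mulKVg; reflexivity).
  replace (gpow D k · (p · ginv q)) with (conjg (gpow (ginv D) k) (p · c)).
  - apply (stable_pow _ garside_inv_stable), Mmul; assumption.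
  - unfold conjg. rewrite gpow_inv, invgK, Einv, <- !gmul_assoc. reflexivity.
Qed.

Lemma positive_shift_list (l : list G) : exists n, forall h, In h l -> M (gpow D n · h).
Proof.
  assert (Hmono : forall j n h, M (gpow D n · h) -> M (gpow D (j + n) · h)).
  { intros j n h Hh. rewrite gpow_add, <- gmul_assoc. apply Mmul; [|exact Hh].
    clear Hh. induction j as [|j IH]; simpl; [exact Mone | apply Mmul; assumption]. }
  induction l as [|h l [n Hn]].
  - exists 0. intros h [].
  - destruct (positive_shift h) as [n0 Hn0]. exists (n + n0).
    intros w [<-|Hw].
    + apply Hmono, Hn0.
    + rewrite Nat.add_comm. apply Hmono, Hn, Hw.
Qed.

Definition prefix (g h : G) : Prop := M (ginv g · h).

Hypothesis Mlattice : is_lattice M (left_div M).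

Lemma prefix_lcm (l : list G) : l <> [] ->
  exists L, (forall o, In o l -> prefix o L) /\
    (forall L', (forall o, In o l -> prefix o L') -> prefix L L').
Proof.
  intro Hne. destruct (positive_shift_list l) as [n Hn]. set (X := gpow D n).
  destruct (lcm_list M Mone Mmul Mlattice (map (fun o => X · o) l))
    as [J [MJ [HJub HJleast]]].
  { intros h Hh. apply in_map_iff in Hh. destruct Hh as [o [<- Ho]]. apply Hn, Ho. }
  exists (ginv X · J). split.
  - intros o Ho. destruct (HJub (X · o) (in_map _ _ _ Ho)) as [_ [c [Mc Ec]]].
    unfold prefix. rewrite <- Ec, <- !gmul_assoc, !mulKg. exact Mc.
  - intros L' HL'. destruct l as [|o0 l0]; [contradiction|].
    assert (MXL' : M (X · L')).
    { rewrite <- (mulKVg o0 L'), gmul_assoc.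
      apply Mmul; [apply Hn | apply HL']; left; reflexivity. }
    destruct (HJleast _ MXL') as [_ [c [Mc Ec]]].
    + intros h Hh. apply in_map_iff in Hh. destruct Hh as [o [<- Ho]].
      split; [apply Hn, Ho|]. exists (ginv o · L'). split; [apply HL', Ho|].
      rewrite <- gmul_assoc, mulKVg. reflexivity.
    + unfold prefix. rewrite invgM, invgK, <- gmul_assoc, <- Ec, mulKg. exact Mc.
Qed.

Lemma prefix_twist (y g h : G) : prefix g h -> prefix (y · g · ginv D) (y · h · ginv D).
Proof.
  intro Hgh. unfold prefix. replace (ginv (y · g · ginv D) · (y · h · ginv D))
    with (conjg (ginv D) (ginv g · h)); [apply garside_inv_stable, Hgh|].
  unfold conjg. rewrite !invgM, invgK, <- !gmul_assoc, mulKg. reflexivity.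
Qed.

Hypothesis Matomic : atomic M.

(** If v D^-1 is positive and v^a = D^a with a >= 1, then v = D: the elements
    P k = v^k D^-k are positive, and P a = 1 exhibits v D^-1 as a unit of M. *)
Lemma garside_root_unique (v : G) (a : nat) :
  1 <= a -> M (v · ginv D) -> gpow v a = gpow D a -> v = D.
Proof.
  intros Ha Mv Eva. set (P k := gpow v k · ginv (gpow D k)).
  assert (HP : forall k, P (S k) = v · ginv D · conjg (ginv D) (P k)).
  { intro k. unfold P, conjg. simpl. rewrite invgK, invgM, <- !gmul_assoc, mulKg.
    reflexivity. }
  assert (MP : forall k, M (P k)).
  { induction k as [|k IH].
    - unfold P. simpl. rewrite invg1, gmul_1l. exact Mone.
    - rewrite HP. apply Mmul; [exact Mv | apply garside_inv_stable, IH]. }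
  assert (Pa : P a = gone) by (unfold P; rewrite Eva, gmul_Vr; reflexivity).
  destruct a as [|a']; [lia|]. rewrite HP in Pa.
  apply (atomic_no_units M Mone Matomic) in Pa; [|exact Mv | apply garside_inv_stable, MP].
  rewrite <- (mulgK v (ginv D)), Pa, invgK, gmul_1l. reflexivity.
Qed.

(** The orbit y^i D^-i (i < a) of 1 under g |-> y g D^-1, closed since y^a = D^a. *)
Definition orbit_elt (y : G) (i : nat) : G := gpow y i · ginv (gpow D i).

Lemma orbit_twist (y : G) i : y · orbit_elt y i · ginv D = orbit_elt y (S i).
Proof. unfold orbit_elt. simpl. rewrite invgM, <- !gmul_assoc. reflexivity. Qed.

Lemma orbit_closed (y : G) (a : nat) : 1 <= a -> gpow y a = gpow D a ->
  forall o, In o (map (orbit_elt y) (seq 0 a)) ->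
  exists o', In o' (map (orbit_elt y) (seq 0 a)) /\ y · o' · ginv D = o.
Proof.
  intros Ha Eya o Ho. apply in_map_iff in Ho. destruct Ho as [[|j] [<- Hj]];
    apply in_seq in Hj.
  - exists (orbit_elt y (a - 1)). split; [apply in_map, in_seq; lia|].
    rewrite orbit_twist. replace (S (a - 1)) with a by lia.
    unfold orbit_elt. rewrite Eya, gmul_Vr. simpl. rewrite invg1, gmul_1l. reflexivity.
  - exists (orbit_elt y j). split; [apply in_map, in_seq; lia|]. apply orbit_twist.
Qed.

Lemma garside_root_conjugate (y : G) (a : nat) :
  1 <= a -> gpow y a = gpow D a -> (forall g, gpow D a · g = g · gpow D a) ->
  conjugate D y.
Proof.
  intros Ha Eya Hcentral. set (O := map (orbit_elt y) (seq 0 a)).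
  assert (HO : O <> []) by (unfold O; destruct a; [lia|discriminate]).
  destruct (prefix_lcm O HO) as [L [HLub HLleast]].
  assert (Hstep : prefix L (y · L · ginv D)).
  { apply HLleast. intros o Ho.
    destruct (orbit_closed y a Ha Eya o Ho) as [o' [Ho' <-]].
    apply prefix_twist, HLub, Ho'. }
  assert (Hv : conjg L y = D).
  { apply (garside_root_unique _ a Ha).
    - unfold prefix in Hstep. rewrite <- !gmul_assoc in Hstep.
      unfold conjg. rewrite <- !gmul_assoc. exact Hstep.
    - rewrite conjg_gpow, Eya. apply conjg_central, Hcentral. }
  exists (ginv L). rewrite gmul_assoc. change (conjg (ginv L) D = y).
  rewrite <- Hv, conjgK. reflexivity.
Qed.

End GarsideElement.

Theorem mainTheorem7 (a : nat) (ha : 2 <= a) (G : Group) (x y : G)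
  (hG : is_presentation a x y) :
  ~ conjugate x y /\ ~ (exists M : G -> Prop, garside_structure M x).
Proof.
  destruct hG as [Exy [Hgen Huniv]].
  assert (Hnc : ~ conjugate x y).
  { intro Hc. destruct (CyclicGroup.Zmod_witness a ha) as [H [h1 [h2 [Eh [Hne Hcomm]]]]].
    destruct (Huniv H h1 h2 Eh) as [f [Hf [<- <-]]].
    exact (Hne (hom_abelian_conjugate f x y Hf Hcomm Hc)). }
  split; [exact Hnc|].
  intros [M [[Mone Mmul] [Mfrac [Matomic [Mlattice [_ [Mx [Mdiv [_ Mgen]]]]]]]]].
  apply Hnc, (garside_root_conjugate M x Mone Mmul Mx Mdiv Mgen Mfrac Mlattice Matomic y a).
  - lia.
  - symmetry. exact Exy.
  - intro g. apply (central_in_gen (fun s => s = x \/ s = y)); [|apply Hgen].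
    intros s [-> | ->]; [|rewrite Exy]; symmetry; apply gpow_commute.
Qed.
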